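(* Let $A_1,\dots,A_n$ be commutative rings with unity and $B=A_1\oplus\cdots\oplus A_n$ their direct product. Let $(a_1,\dots,a_n)\in B$ be a non-zero, non-unit element. If $(a_1,\dots,a_n)$ is F-irreducible in $B$, then there exists $i\in\{1,\dots,n\}$ such that $a_i$ is F-irreducible in $A_i$ and $a_j$ is a unit of $A_j$ for every $j\neq i$.
   Context: For a commutative ring with unity $R$ and $r\in R$: a factorization of $r$ is an expression $r=a_1\cdots a_m$ with $a_k\in R$; a refinement of this factorization is a factorization obtained by replacing one or more of the factors by a factorization of that factor. A non-unit element $r\in R$ is called F-irreducible if every factorization of $r$ has a refinement in which $r$ appears as one of the new factors. *)

From Stdlib Require List.
From HB Require Import structures.
From mathcomp Require Import all_boot all_order all_algebra.
Set Implicit Arguments. Unset Strict Implicit. Unset Printing Implicit Defensive.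
Import GRing.Theory.
Local Open Scope ring_scope.

(* Notions of the paper stated for a commutative multiplicative monoid
   (T, mul, one); they only involve multiplication and the unity. *)
Section MonoidNotions.
Variables (T : Type) (mul : T -> T -> T) (one : T).

Definition mprod (s : seq T) : T := foldr mul one s.

Definition m_unit (x : T) : Prop := exists y, mul x y = one.

(* r is F-irreducible: r is a non-unit and every factorization
   r = a_1 ... a_m has a refinement (some factor a_k replaced by a
   factorization a_k = b_1 ... b_l) in which r is one of the new factors. *)
Definition m_F_irreducible (r : T) : Prop :=
  ~ m_unit r /\
  forall s : seq T, mprod s = r ->
    exists a (t : seq T), List.In a s /\ mprod t = a /\ List.In r t.
End MonoidNotions.

Definition is_unit (R : comPzRingType) (x : R) : Prop := m_unit *%R 1 x.
Definition F_irreducible (R : comPzRingType) (x : R) : Prop :=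
  m_F_irreducible *%R 1 x.

Definition dprod_ring (n : nat) (A : 'I_n -> comPzRingType) : Type :=
  forall i : 'I_n, A i.
Definition dprod_mul (n : nat) (A : 'I_n -> comPzRingType)
  (x y : dprod_ring A) : dprod_ring A := fun i => x i * y i.
Definition dprod_one (n : nat) (A : 'I_n -> comPzRingType) : dprod_ring A :=
  fun i => 1.
Definition dprod_zero (n : nat) (A : 'I_n -> comPzRingType) : dprod_ring A :=
  fun i => 0.

From mathcomp Require Import all_boot all_order all_algebra.
From Stdlib Require Import Classical FunctionalExtensionality.
Local Open Scope ring_scope.
Import GRing.Theory.

(* In a commutative monoid, r is F-irreducible exactly when it is a non-unit
   dividing some factor of every factorization of r.  In the product B, the
   element a factors as (a with a_i replaced by 1) times the images of a
   factorization of a_i placed in coordinate i; a must divide one of these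
   factors.  Dividing the first one makes a_i a unit, dividing an image of
   x makes a_i divide x and every other coordinate of a a unit.  Choosing i
   with a_i a non-unit, this yields both conclusions. *)

Definition m_dvd (T : Type) (mul : T -> T -> T) (r x : T) : Prop :=
  exists c, x = mul r c.
Arguments m_dvd {T}.

Section CommutativeMonoid.
Variables (T : Type) (mul : T -> T -> T) (one : T).
Hypotheses (mulA : associative mul) (mulC : commutative mul)
  (mul1 : right_id one mul).

Lemma m_dvd_mprod r t : List.In r t -> m_dvd mul r (mprod mul one t).
Proof.
elim: t => [//|b t IH] /= [->|/IH [c ->]]; first by exists (mprod mul one t).
by exists (mul b c); rewrite mulA (mulC b r) -mulA.
Qed.

Lemma m_F_irreducibleP r :
  m_F_irreducible mul one r <->
  ~ m_unit mul one r /\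
  forall s, mprod mul one s = r -> exists2 x, List.In x s & m_dvd mul r x.
Proof.
split=> -[r_nunit r_irr]; split=> // s def_r.
- have [x [t [xs [def_x rt]]]] := r_irr s def_r.
  by exists x; rewrite // -def_x; apply: m_dvd_mprod.
- have [x xs [c def_x]] := r_irr s def_r.
  by exists x, [:: r; c]; rewrite /= mul1 -def_x; do !split => //; left.
Qed.

End CommutativeMonoid.

Arguments m_F_irreducibleP {T mul one}.

Section DirectProduct.
Variables (n : nat) (A : 'I_n -> comPzRingType).
Local Notation B := (dprod_ring A).
Local Notation mulB := (@dprod_mul n A).
Local Notation oneB := (dprod_one A).

Lemma dprod_mulA : associative mulB.
Proof. by move=> x y z; apply: functional_extensionality_dep => i; apply: mulrA. Qed.

Lemma dprod_mulC : commutative mulB.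
Proof. by move=> x y; apply: functional_extensionality_dep => i; apply: mulrC. Qed.

Lemma dprod_mul1 : right_id oneB mulB.
Proof. by move=> x; apply: functional_extensionality_dep => i; apply: mulr1. Qed.

Lemma dprod_unit (a : B) : (forall i, is_unit (a i)) -> m_unit mulB oneB a.
Proof.
move=> a_unit; have inv_ex i : exists y : A i, a i * y == 1.
  by have [y /eqP] := a_unit i; exists y.
exists (fun i => xchoose (inv_ex i)).
by apply: functional_extensionality_dep => i; apply/eqP/(xchooseP (inv_ex i)).
Qed.

Lemma mprod_dfwith (f : B) i (s : seq (A i)) :
  mprod mulB oneB (dfwith f (1 : A i) :: map (@dfwith _ _ oneB i) s) =
  dfwith f (mprod *%R 1 s).
Proof.
elim: s => [|x s IH] /=.
  by apply: functional_extensionality_dep => j; rewrite /dprod_mul mulr1.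
move: IH => /= IH.
rewrite dprod_mulA (dprod_mulC _ (dfwith oneB x)) -dprod_mulA IH.
apply: functional_extensionality_dep => j; rewrite /dprod_mul.
by case: dfwithP => [|k ik]; rewrite ?dfwith_in ?dfwith_out ?mul1r.
Qed.

Lemma F_irreducible_dprod_factor (a : B) i (s : seq (A i)) :
  m_F_irreducible mulB oneB a -> mprod *%R 1 s = a i ->
  is_unit (a i) \/
  (exists2 x, List.In x s & m_dvd *%R (a i) x) /\
  (forall j, j != i -> is_unit (a j)).
Proof.
move=> /(m_F_irreducibleP dprod_mulA dprod_mulC dprod_mul1) [_ a_irr] def_ai.
have def_a : mprod mulB oneB (dfwith a (1 : A i) :: map (@dfwith _ _ oneB i) s) = a.
  rewrite mprod_dfwith def_ai; apply: functional_extensionality_dep => j.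
  by case: dfwithP.
have [y [<-|/List.in_map_iff [x [<- xs]]] [c def_y]] := a_irr _ def_a.
  by left; exists (c i); move/(congr1 (fun g => g i)): def_y; rewrite dfwith_in.
right; split.
  by exists x => //; exists (c i); move/(congr1 (fun g => g i)): def_y; rewrite dfwith_in.
move=> j ji; exists (c j); move/(congr1 (fun g => g j)): def_y.
by rewrite dfwith_out // eq_sym.
Qed.

End DirectProduct.

Arguments F_irreducible_dprod_factor {n A a i} s.

Theorem mainTheorem6 (n : nat) (A : 'I_n -> comPzRingType) (a : dprod_ring A) :
  a <> dprod_zero A ->
  ~ m_unit (@dprod_mul n A) (dprod_one A) a ->
  m_F_irreducible (@dprod_mul n A) (dprod_one A) a ->
  exists i : 'I_n, F_irreducible (a i) /\
    (forall j : 'I_n, j != i -> is_unit (a j)).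
Proof.
move=> _ a_nunit a_irr.
have [i ai_nunit] : exists i, ~ is_unit (a i).
  by apply: not_all_ex_not => a_unit; apply/a_nunit/dprod_unit.
have others_unit j : j != i -> is_unit (a j).
  move=> ji; case: (F_irreducible_dprod_factor [:: a j] a_irr) => [|//|[_]].
    exact: mulr1.
  by move/(_ i); rewrite eq_sym ji => /(_ isT).
exists i; split=> //.
apply/(m_F_irreducibleP (@mulrA _) (@mulrC _) (@mulr1 _)); split=> // s def_ai.
by case: (F_irreducible_dprod_factor s a_irr def_ai) => [|[]].
Qed.
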